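(* Let $p$ be a prime and $1\le\ell<p$. For every $u\in\mathbb{F}_p$, \[\#S_\ell(u)=\binom{p}{\ell}\Big/p=S_\ell^*+S_{\ell-1}^*=S_\ell^{*0}+S_{\ell-1}^{*0}.\]
   Context: For $u\in\mathbb{F}_p$ and $0\le \ell\le p$, $S_\ell(u)=\{S\subseteq\mathbb{F}_p \mid \#S=\ell,\ \sum_{s\in S}s=u\}$, and for $0\le\ell<p$, $S_\ell^*(u)=\{S\subseteq\mathbb{F}_p^* \mid \#S=\ell,\ \sum_{s\in S}s=u\}$, where $\mathbb{F}_p^*=\mathbb{F}_p\setminus\{0\}$ and sums are in $\mathbb{F}_p$. The cardinality $\#S_\ell^*(u)$ does not depend on $u\in\mathbb{F}_p^*$; this common value is denoted $S_\ell^*$. Also $S_\ell^{*0}:=\#S_\ell^*(0)$. *)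

From HB Require Import structures.
From mathcomp Require Import all_boot all_order all_algebra.
Set Implicit Arguments. Unset Strict Implicit. Unset Printing Implicit Defensive.
Import GRing.Theory Num.Theory.
Local Open Scope ring_scope.

Definition Sl (p : nat) (l : nat) (u : 'F_p) : {set {set 'F_p}} :=
  [set S : {set 'F_p} | (#|S| == l)%N && (\sum_(s in S) s == u)].

Definition Sstar (p : nat) (l : nat) (u : 'F_p) : {set {set 'F_p}} :=
  [set S : {set 'F_p} | [&& (#|S| == l)%N, (0 : 'F_p) \notin S & (\sum_(s in S) s == u)]].

From HB Require Import structures.
From mathcomp Require Import all_boot all_order all_algebra.
Import GRing.Theory Num.Theory.

(* Translating an l-set by t adds l * t to its sum; when p does not divide l
   this reaches every residue, so all the #S_l(u) are equal, and as they add up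
   to binomial(p, l) each is binomial(p, l) / p.  Sorting the sets of S_l(u)
   according to whether they contain 0 gives S_l(u) = S*_l(u) + S*_(l-1)(u). *)

Local Open Scope ring_scope.

Lemma sum_imset_addr (V : finZmodType) (S : {set V}) (t : V) :
  \sum_(s in [set x + t | x in S]) s = \sum_(s in S) s + t *+ #|S|.
Proof.
rewrite big_imset /=; last by move=> x y _ _; apply: addIr.
by rewrite big_split /= sumr_const.
Qed.

Section PrimeField.

Variable p : nat.
Hypothesis p_pr : prime p.

Lemma leq_card_Sl (l : nat) (u w : 'F_p) : ~~ (p %| l)%N ->
  (#|Sl l u| <= #|Sl l w|)%N.
Proof.
move=> p'l; have l_neq0 : (l%:R : 'F_p) != 0.
  by rewrite -(dvdn_pcharf (pchar_Fp p_pr)).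
pose t := (w - u) / l%:R.
pose shift (S : {set 'F_p}) := [set x + t | x in S].
have shift_inj : injective shift.
  apply: (can_inj (g := fun S : {set 'F_p} => [set x - t | x in S])) => S.
  by rewrite /shift -imset_comp -[RHS]imset_id; apply: eq_imset => x /=; rewrite addrK.
rewrite -(card_imset _ shift_inj); apply: subset_leq_card.
apply/subsetP => _ /imsetP [S + ->]; rewrite !inE => /andP [/eqP cardS /eqP sumS].
rewrite card_imset; last exact: addIr.
rewrite cardS eqxx sum_imset_addr cardS sumS /=.
by rewrite /t -[_ *+ l]mulr_natr divfK // addrC subrK.
Qed.

Lemma card_Sl_const (l : nat) (u w : 'F_p) : ~~ (p %| l)%N ->
  #|Sl l u| = #|Sl l w|.
Proof. by move=> p'l; apply/eqP; rewrite eqn_leq !leq_card_Sl. Qed.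

Lemma sum_card_Sl (l : nat) : (\sum_(u : 'F_p) #|Sl l u|)%N = 'C(p, l).
Proof.
have := card_draws 'F_p l; rewrite card_Fp // => <-; rewrite -sum1_card.
rewrite (partition_big (fun S : {set 'F_p} => \sum_(s in S) s) predT) //=.
by apply: eq_bigr => u _; rewrite -sum1_card; apply: eq_bigl => S; rewrite !inE.
Qed.

Lemma card_Sl_mul (l : nat) (u : 'F_p) : ~~ (p %| l)%N ->
  (p * #|Sl l u|)%N = 'C(p, l).
Proof.
move=> p'l; rewrite -sum_card_Sl (eq_bigr (fun=> #|Sl l u|)) => [|w _]; last first.
  exact: card_Sl_const.
by rewrite sum_nat_const card_Fp // mulnC.
Qed.

Lemma Sl_mem0 (l : nat) (u : 'F_p) : (0 < l)%N ->
  Sl l u :&: [set S : {set 'F_p} | 0 \in S] = [set 0 |: T | T in Sstar l.-1 u].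
Proof.
move=> l_gt0; apply/setP => S; rewrite !inE; apply/idP/imsetP.
- move=> /andP [/andP [/eqP cardS /eqP sumS] S0]; exists (S :\ 0); last by rewrite setD1K.
  rewrite !inE eqxx -cardS (cardsD1 0 S) S0 eqxx.
  by apply/eqP; rewrite -sumS (big_setD1 _ S0); exact/esym/add0r.
- move=> [T]; rewrite !inE => /and3P [/eqP cardT T'0 /eqP sumT] ->.
  by rewrite cardsU1 T'0 cardT add1n prednK // big_setU1 //= add0r sumT setU11 !eqxx.
Qed.

Lemma card_Sl_split (l : nat) (u : 'F_p) : (0 < l)%N ->
  #|Sl l u| = (#|Sstar l u| + #|Sstar l.-1 u|)%N.
Proof.
move=> l_gt0; rewrite -(cardsID [set S : {set 'F_p} | 0 \in S]) Sl_mem0 // addnC.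
congr (_ + _)%N.
  by apply: eq_card => S; rewrite !inE; case: (0 \in S); rewrite ?andbF.
apply: card_in_imset => T1 T2; rewrite !inE => /and3P [_ T1'0 _] /and3P [_ T2'0 _] eqT.
by rewrite -(setU1K T1'0) -(setU1K T2'0) eqT.
Qed.

End PrimeField.

Theorem proposition4 (p l : nat) (hp : prime p) (hl1 : (1 <= l)%N) (hlp : (l < p)%N)
  (u : 'F_p) :
  ((#|Sl l u|%:Q = ('C(p, l))%:Q / p%:Q)%R
   /\ (forall v : 'F_p, v != 0%R ->
         #|Sl l u| = (#|Sstar l v| + #|Sstar l.-1 v|)%N)
   /\ #|Sl l u| = (#|Sstar l (0%R : 'F_p)| + #|Sstar l.-1 (0%R : 'F_p)|)%N).
Proof.
have p'l : ~~ (p %| l)%N by rewrite gtnNdvd.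
have p_neq0 : p%:Q != 0 by rewrite pnatr_eq0 -lt0n prime_gt0.
split; last split.
- by rewrite -(card_Sl_mul p hp l u p'l) PoszM intrM mulrAC divff ?mul1r.
- by move=> v _; rewrite (card_Sl_const p hp l u v p'l) card_Sl_split.
- by rewrite (card_Sl_const p hp l u 0 p'l) card_Sl_split.
Qed.
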